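(* Let $\mathcal E$ be an eventual identity on an $F$-manifold $(M,\circ,e)$. Then for all integers $m,n\in\mathbb Z$, $$[\mathcal E^n,\mathcal E^m]=(m-n)\,\mathcal E^{m+n-1}\circ[e,\mathcal E].$$
   Context: An $F$-manifold $(M,\circ,e)$ is a smooth manifold $M$ together with a commutative, associative, $C^\infty(M)$-bilinear multiplication $\circ$ on $TM$ with unit vector field $e$, such that $$L_{X\circ Y}(\circ)=X\circ L_Y(\circ)+Y\circ L_X(\circ)$$ for all vector fields $X,Y$. Here $$L_Z(\circ)(X,Y):=[Z,X\circ Y]-[Z,X]\circ Y-X\circ[Z,Y].$$ A vector field $\mathcal E$ is invertible if there is a vector field $\mathcal E^{-1}$ with $\mathcal E\circ\mathcal E^{-1}=e$ everywhere on $M$. An eventual identity on $(M,\circ,e)$ is an invertible vector field $\mathcal E$ such that the multiplication $X*Y:=X\circ Y\circ\mathcal E^{-1}$ defines an $F$-manifold structure on $M$ (its unit is $\mathcal E$). Powers are taken with respect to $\circ$: $\mathcal E^0=e$, $\mathcal E^{n}=\mathcal E\circ\cdots\circ\mathcal E$ ($n$ factors) for $n>0$, and $\mathcal E^{-n}=(\mathcal E^{-1})^n$. *)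

(* Smooth manifolds are not available; vector fields on M are
   modelled abstractly as a Lie-Rinehart algebra (V, [.,.], rho) over the
   commutative ring A (= C^oo(M)). *)
From HB Require Import structures.
From mathcomp Require Import all_boot all_order all_algebra.
Set Implicit Arguments. Unset Strict Implicit. Unset Printing Implicit Defensive.
Import GRing.Theory.
Local Open Scope ring_scope.

Section Defs.
Variables (A : comPzRingType) (V : lmodType A).

(* (V, br, rho) is a Lie-Rinehart algebra over A: the axioms satisfied by
   smooth vector fields on a manifold with functions A = C^oo(M), Lie bracket
   br and action rho X f = X(f). *)
Definition LieRinehart (br : V -> V -> V) (rho : V -> A -> A) : Prop :=
  (forall X Y Z, br (X + Y) Z = br X Z + br Y Z) /\
      (forall X Y, br X Y = - br Y X) /\
      (forall X Y Z, br X (br Y Z) + br Y (br Z X) + br Z (br X Y) = 0) /\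
      (forall X f g, rho X (f + g) = rho X f + rho X g) /\
      (forall X f g, rho X (f * g) = rho X f * g + f * rho X g) /\
      (forall X Y f, rho (X + Y) f = rho X f + rho Y f) /\
      (forall X g f, rho (g *: X) f = g * rho X f) /\
      (forall X Y f, rho (br X Y) f = rho X (rho Y f) - rho Y (rho X f)) /\
      (forall X Y f, br X (f *: Y) = rho X f *: Y + f *: br X Y).

Definition LieD (br : V -> V -> V) (mul : V -> V -> V) (Z X Y : V) : V :=
  br Z (mul X Y) - mul (br Z X) Y - mul X (br Z Y).

Definition Fmult (br : V -> V -> V) (mul : V -> V -> V) (u : V) : Prop :=
  (forall X Y Z, mul (X + Y) Z = mul X Z + mul Y Z) /\
      (forall f X Y, mul (f *: X) Y = f *: mul X Y) /\
      (forall X Y, mul X Y = mul Y X) /\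
      (forall X Y Z, mul X (mul Y Z) = mul (mul X Y) Z) /\
      (forall X, mul u X = X) /\
      (forall X Y Z W, LieD br mul (mul X Y) Z W
                       = mul X (LieD br mul Y Z W) + mul Y (LieD br mul X Z W)).

Definition eventual_identity (br : V -> V -> V) (mul : V -> V -> V) (e E : V)
  : Prop :=
  exists Einv : V, mul E Einv = e /\
    Fmult br (fun X Y => mul (mul X Y) Einv) E.

Definition npow (mul : V -> V -> V) (e X : V) (n : nat) : V :=
  iter n (mul X) e.

Definition zpow (mul : V -> V -> V) (e E Einv : V) (z : int) : V :=
  match z with
  | Posz n => npow mul e E n
  | Negz n => npow mul e Einv n.+1
  end.

End Defs.

From HB Require Import structures.
From mathcomp Require Import all_boot all_order all_algebra.
From mathcomp Require Import ring.
Import GRing.Theory.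
Local Open Scope ring_scope.

(* In an F-manifold with unit u, the F-identity for X = Y = u reads
   L_u = 2 L_u, so L_u(o) = 0.  Applied to the product X * Y := X o Y o E^-1,
   whose unit is E, this gives L^*_E = 0, which unwinds to
   L_E(o)(X, Y) = X o Y o [e, E].  By the Leibniz rule for [Z, X o Y] and the
   F-identity, the maps k |-> [e, E^k], k |-> L_{E^k}(o), k |-> [E, E^k] and,
   for fixed n, k |-> [E^n, E^k] all satisfy a recurrence
   g(k+1) = g(k) o E + E^k o c over the integers; as E is invertible, its only
   solution is g(k) = E^k o g(0) + k E^(k-1) o c. *)

Section FmultUnit.
Context {A : comPzRingType} {V : lmodType A} {br mul : V -> V -> V} {u : V}.
Hypothesis mulF : Fmult br mul u.

Lemma Fmult_LieD_unit X Y : LieD br mul u X Y = 0.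
Proof.
have [_ [_ [_ [_ [mul1o muloF]]]]] := mulF.
apply: (addrI (LieD br mul u X Y)); rewrite addr0.
by have := muloF u u X Y; rewrite !mul1o.
Qed.

Lemma Fmult_br_unit : br u u = 0.
Proof.
have [_ [_ [muloC [_ [mul1o _]]]]] := mulF.
have := Fmult_LieD_unit u u; rewrite /LieD [mul (br u u) u]muloC !mul1o.
by rewrite subrr sub0r => /eqP; rewrite oppr_eq0 => /eqP.
Qed.

End FmultUnit.

Section CommutativeProduct.
Variables (A : comPzRingType) (V : lmodType A) (mul : V -> V -> V) (e : V).
Hypothesis muloDl : forall X Y Z, mul (X + Y) Z = mul X Z + mul Y Z.
Hypothesis muloZl : forall f X Y, mul (f *: X) Y = f *: mul X Y.
Hypothesis muloC : forall X Y, mul X Y = mul Y X.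
Hypothesis muloA : forall X Y Z, mul X (mul Y Z) = mul (mul X Y) Z.
Hypothesis mul1o : forall X, mul e X = X.

Lemma mulo1 X : mul X e = X. Proof. by rewrite muloC mul1o. Qed.
Lemma mul0o X : mul 0 X = 0. Proof. by rewrite -(scale0r 0) muloZl !scale0r. Qed.
Lemma mulo0 X : mul X 0 = 0. Proof. by rewrite muloC mul0o. Qed.
Lemma mulNo X Y : mul (- X) Y = - mul X Y.
Proof. by rewrite -scaleN1r muloZl scaleN1r. Qed.
Lemma muloN X Y : mul X (- Y) = - mul X Y.
Proof. by rewrite muloC mulNo muloC. Qed.
Lemma muloDr X Y Z : mul X (Y + Z) = mul X Y + mul X Z.
Proof. by rewrite muloC muloDl !(muloC X). Qed.
Lemma muloBl X Y Z : mul (X - Y) Z = mul X Z - mul Y Z.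
Proof. by rewrite muloDl mulNo. Qed.
Lemma mulozl X Y k : mul (X *~ k) Y = mul X Y *~ k.
Proof. by rewrite -!scaler_int muloZl. Qed.
Lemma mulozr X Y k : mul X (Y *~ k) = mul X Y *~ k.
Proof. by rewrite muloC mulozl muloC. Qed.
Lemma muloCA X Y Z : mul X (mul Y Z) = mul Y (mul X Z).
Proof. by rewrite muloA (muloC X) -muloA. Qed.
Lemma muloAC X Y Z : mul (mul X Y) Z = mul (mul X Z) Y.
Proof. by rewrite -muloA (muloC Y) muloA. Qed.

Section IntegerPowers.
Variables (E Ei : V).
Hypothesis mulEEi : mul E Ei = e.

Local Notation P := (zpow mul e E Ei).

Lemma mulEK X : mul (mul X E) Ei = X.
Proof. by rewrite -muloA mulEEi mulo1. Qed.
Lemma mulEiK X : mul (mul X Ei) E = X.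
Proof. by rewrite muloAC mulEK. Qed.

Lemma inverse_unique Ei' : mul E Ei' = e -> Ei' = Ei.
Proof. by move=> mulEEi'; rewrite -(mulEK Ei') (muloC Ei') mulEEi' mul1o. Qed.

Lemma zpow0 : P 0 = e. Proof. by []. Qed.

Lemma zpowS k : P (k + 1) = mul (P k) E.
Proof.
case: k => [n|[|n]].
- by rewrite -PoszD addn1 /= /npow /= muloC.
- by rewrite /= /npow /= mulo1 muloC mulEEi.
- have -> : Negz n.+1 + 1 = Negz n by rewrite !NegzE; ring.
  by rewrite /= /npow /= [RHS]muloAC (muloC Ei E) mulEEi mul1o.
Qed.

Lemma zpowB1E k : mul (P (k - 1)) E = P k.
Proof. by rewrite -zpowS subrK. Qed.

Lemma zpowB1 k : P (k - 1) = mul (P k) Ei.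
Proof. by rewrite -[P k]zpowB1E mulEK. Qed.

Lemma zpowD j k : mul (P j) (P k) = P (j + k).
Proof.
elim/int_rec: k => [|n IH|n IH]; first by rewrite zpow0 mulo1 addr0.
  by rewrite -addn1 PoszD addrA !zpowS muloA IH.
by rewrite -addn1 PoszD opprD addrA !zpowB1 muloA IH.
Qed.

Lemma recurrence_zero (h : int -> V) :
  h 0 = 0 -> (forall k, h (k + 1) = mul (h k) E) -> forall k, h k = 0.
Proof.
move=> h0 hS; elim/int_rec => [//|n IH|n IH].
  by rewrite -addn1 PoszD hS IH mul0o.
have := hS (- Posz n.+1); rewrite -addn1 PoszD opprD subrK IH => /esym.
by move/(congr1 (mul^~ Ei)); rewrite mulEK mul0o.
Qed.

Lemma zpow_recurrence (g : int -> V) (c : V) :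
    (forall k, g (k + 1) = mul (g k) E + mul (P k) c) ->
  forall k, g k = mul (P k) (g 0) + mul (P (k - 1)) c *~ k.
Proof.
move=> gS k; apply/eqP; rewrite -subr_eq0; apply/eqP; move: k.
apply: recurrence_zero => [|k]; first by rewrite zpow0 mul1o mulr0z addr0 subrr.
rewrite gS zpowS addrK mulrzDr mulr1z muloBl muloDl mulozl.
rewrite !(muloAC (P _) _ E) zpowB1E.
by rewrite addrA opprD addrACA subrr addr0.
Qed.

Section FManifold.
Variable br : V -> V -> V.
Hypothesis muloF : forall X Y Z W, LieD br mul (mul X Y) Z W
                                   = mul X (LieD br mul Y Z W) + mul Y (LieD br mul X Z W).

Lemma Fmult_mul : Fmult br mul e.
Proof. by do !split. Qed.

Lemma br_mul Z X Y :
  br Z (mul X Y) = LieD br mul Z X Y + mul (br Z X) Y + mul X (br Z Y).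
Proof. by rewrite /LieD addrAC !subrK. Qed.

Lemma LieD_unit_r Z X : LieD br mul Z X e = - mul X (br Z e).
Proof. by rewrite /LieD !mulo1 subrr sub0r. Qed.

Lemma br_unit_zpow k : br e (P k) = mul (P (k - 1)) (br e E) *~ k.
Proof.
rewrite (zpow_recurrence (fun k => br e (P k)) (br e E)) => [|j].
  by rewrite zpow0 (Fmult_br_unit Fmult_mul) mulo0 add0r.
by rewrite zpowS br_mul (Fmult_LieD_unit Fmult_mul) add0r.
Qed.

Lemma LieD_zpow k X Y :
  LieD br mul (P k) X Y = mul (P (k - 1)) (LieD br mul E X Y) *~ k.
Proof.
rewrite (zpow_recurrence (fun k => LieD br mul (P k) X Y) (LieD br mul E X Y)) => [|j].
  by rewrite zpow0 (Fmult_LieD_unit Fmult_mul) mulo0 add0r.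
by rewrite zpowS muloF addrC muloC.
Qed.

Section EventualIdentity.
Hypothesis brN : forall X Y, br X Y = - br Y X.
Hypothesis evmulF : Fmult br (fun X Y => mul (mul X Y) Ei) E.

Lemma br_E_Einv : br E Ei = - (mul (br e E) Ei + mul (br e E) Ei).
Proof.
have := Fmult_LieD_unit evmulF e e; rewrite /LieD !mul1o mulo1 (brN E e) mulNo.
by rewrite !opprK -addrA => /eqP; rewrite addr_eq0 => /eqP.
Qed.

(* L^*_E(X, Y) = 0, with both brackets expanded by [br_mul]. *)
Lemma LieD_E_expand X Y :
  LieD br mul E (mul X Y) Ei + mul (LieD br mul E X Y) Ei + mul (mul X Y) (br E Ei) = 0.
Proof.
have := Fmult_LieD_unit evmulF X Y.
rewrite [LieD _ (fun _ _ => _) _ _ _]/LieD br_mul [br E (mul X Y)]br_mul 2!muloDl => <-.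
set a := mul (mul (br E X) Y) Ei; set b := mul (mul X (br E Y)) Ei.
by rewrite !(addrAC _ (mul _ (br E Ei))) addrA (addrAC _ b) addrK addrA addrK.
Qed.

Lemma LieD_E_Einv X : LieD br mul E X Ei = mul (mul X (br e E)) Ei.
Proof.
have := LieD_E_expand X e.
rewrite !mulo1 LieD_unit_r (brN E e) muloN opprK br_E_Einv muloN muloDr muloA.
by rewrite opprD addrA addrK => /eqP; rewrite subr_eq0 => /eqP.
Qed.

Lemma LieD_E X Y : LieD br mul E X Y = mul (mul X Y) (br e E).
Proof.
rewrite -[LHS]mulEiK -[RHS]mulEiK; congr (mul _ E).
have := LieD_E_expand X Y; rewrite LieD_E_Einv br_E_Einv muloN muloDr muloA.
set w := mul (mul (mul X Y) (br e E)) Ei.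
by rewrite (addrC w) opprD addrA addrK => /eqP; rewrite subr_eq0 => /eqP.
Qed.

Lemma br_E_zpow k : br E (P k) = mul (P k) (br e E) *~ (k - 1).
Proof.
rewrite (zpow_recurrence (fun k => br E (P k)) (mul E (br e E))) => [|j].
  by rewrite zpow0 (brN E e) muloN muloA zpowB1E mulrzBr mulr1z addrC.
rewrite zpowS br_mul LieD_E (Fmult_br_unit evmulF) mulo0 addr0.
by rewrite addrC muloA.
Qed.

Lemma br_zpow_zpow n m :
  br (P n) (P m) = mul (P (m + n - 1)) (br e E) *~ (m - n).
Proof.
rewrite (zpow_recurrence (fun k => br (P n) (P k)) (mul (P n) (br e E))) => [|j].
  rewrite zpow0 brN br_unit_zpow muloN mulozr !muloA !zpowD addrA (addrAC m).
  by rewrite mulrzBr (addrC (- _)).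
rewrite zpowS br_mul LieD_zpow LieD_E (brN (P n) E) br_E_zpow muloN mulozr.
have -> : mul (P (n - 1)) (mul (mul (P j) E) (br e E)) = mul (P j) (mul (P n) (br e E)).
  by rewrite muloCA -muloA; congr (mul (P j) _); rewrite muloA (muloC E) zpowB1E.
by rewrite mulrzBr mulr1z opprB addrC addrA subrK addrC.
Qed.

End EventualIdentity.
End FManifold.
End IntegerPowers.
End CommutativeProduct.

Theorem mainTheorem6 (A : comPzRingType) (V : lmodType A)
  (br : V -> V -> V) (rho : V -> A -> A) (mul : V -> V -> V) (e E Einv : V) :
  LieRinehart br rho ->
  Fmult br mul e ->
  eventual_identity br mul e E ->
  mul E Einv = e ->
  forall m n : int,
    br (zpow mul e E Einv n) (zpow mul e E Einv m)
    = mul (zpow mul e E Einv (m + n - 1)) (br e E) *~ (m - n).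
Proof.
move=> [_ [brN _]] [muloDl [muloZl [muloC [muloA [mul1o muloF]]]]].
move=> [Ei [mulEEi evmulF]] mulEEinv m n.
have -> : Einv = Ei by exact: inverse_unique mulEEinv.
exact: br_zpow_zpow muloF brN evmulF n m.
Qed.
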